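(* Let $p$ be a stochastic choice function on $X$ and $M\in\mathcal N$. (a) There exists an MSC $\langle Q,\nu\rangle$ rationalizing $p$ such that $Q(M)$ is pairwise comparable if and only if $p(\cdot,M)$ is bounded in a cycle over every pair $(i,j)$ of distinct elements of $M$. (b) There exists an MSC $\langle Q,\nu\rangle$ rationalizing $p$ such that $Q(M)$ is fully comparable if and only if $p(i,M)>0$ for all $i\in M$, $p(i,\{i,j\})>0$ for all $i,j\in M$, and $p(\cdot,M)$ is bounded in a cycle over every pair $(i,j)$ of distinct elements of $M$.
   Context: $X$ is a finite set of alternatives; a menu is a nonempty subset of $X$, and $\mathcal N$ denotes the set of all menus. A stochastic choice function is a map $p:X\times\mathcal N\to[0,1]$ with $\sum_{i\in M}p(i,M)=1$ and $p(i,M)=0$ for $i\notin M$; $p(\cdot,M)$ denotes the row vector $(p(i,M))_{i\in M}$. For $M\in\mathcal N$ and $i,j\in M$ let $\delta_{ij}(M)=p(i,M)\,p(j,\{i,j\})-p(i,\{i,j\})\,p(j,M)$. An MSC (Markov stochastic choice model) $\langle Q,\nu\rangle$ consists of, for every menu $M$, a matrix $Q(M)=(q_{ij}(M))_{i,j\in M}$ with nonnegative entries and a probability distribution $\nu_M$ on $M$, such that for all $M\in\mathcal N$ and distinct $i,j\in M$: (A1) $q_{ii}(M)=1-\sum_{k\neq i}q_{ik}(M)>0$; (A2) if $q_{ij}(\{i,j\})=0$ then $q_{ji}(\{i,j\})>0$; (A3) $q_{ij}(\{i,j\})\,q_{ji}(M)=q_{ji}(\{i,j\})\,q_{ij}(M)$.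 For a right stochastic matrix $Q$ on $M$ and a distribution $\nu$ on $M$ define $\rho(\nu,Q)=\lim_{\alpha\to0^+}\sum_{t\ge0}\alpha(1-\alpha)^t\nu Q^t$ (the limit exists and satisfies $\rho(\nu,Q)(I-Q)=0$). $p$ is rationalized by the MSC $\langle Q,\nu\rangle$ if $p(\cdot,M)=\rho(\nu_M,Q(M))$ for every $M\in\mathcal N$. $Q(M)$ is pairwise comparable if for all distinct $i,j\in M$, $q_{ij}(M)=0$ implies $q_{ji}(M)>0$; it is fully comparable if $q_{ij}(M)>0$ for all distinct $i,j\in M$. A cycle on a set $M'=\{i_1,\dots,i_n\}$ (distinct elements in some order) is the set of ordered pairs $\{(i_1,i_2),\dots,(i_{n-1},i_n),(i_n,i_1)\}$. $p(\cdot,M)$ is bounded in a cycle over the pair $(i,j)$ if either $\delta_{ij}(M)=0$, or there exist $M'\subseteq M$ and a cycle on $M'$ containing $(i,j)$ such that all $\delta_{kl}(M)$, $(k,l)$ in the cycle, are strictly positive, or all are strictly negative. *)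

From HB Require Import structures.
From mathcomp Require Import all_boot all_order all_algebra.
From mathcomp Require Import all_classical all_reals all_analysis.
Set Implicit Arguments. Unset Strict Implicit. Unset Printing Implicit Defensive.
Import Order.TTheory GRing.Theory Num.Theory.
Import numFieldNormedType.Exports.
Local Open Scope ring_scope.


(* X is a finite type T; menus are nonempty sets M : {set T}.
   A stochastic choice function is p : T -> {set T} -> R (values on the
   empty set are irrelevant). *)

Section Defs.
Variables (R : realType) (T : finType).

Definition menu (M : {set T}) : Prop := M != finset.set0.

Definition stoch_choice (p : T -> {set T} -> R) : Prop :=
  forall M : {set T}, menu M ->
    (forall i, 0 <= p i M <= 1) /\
    \sum_(i in M) p i M = 1 /\
    (forall i, i \notin M -> p i M = 0).

Definition delta (p : T -> {set T} -> R) (M : {set T}) (i j : T) : R :=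
  p i M * p j [set i; j] - p i [set i; j] * p j M.

(* A cycle on M' = {i_1,...,i_n} is encoded by the duplicate-free sequence
   s = [:: i_1; ...; i_n]; its pairs are (x, next s x) for x in s. *)
Definition bounded_in_cycle (p : T -> {set T} -> R) (M : {set T}) (i j : T)
  : Prop :=
  delta p M i j = 0 \/
  exists s : seq T,
    [/\ uniq s, {subset s <= M}, i \in s, next s i = j &
        (cycle (fun k l => 0 < delta p M k l) s \/
         cycle (fun k l => delta p M k l < 0) s)].

(* Q M i j = q_ij(M), nu M i = nu_M(i); only entries with i, j in M matter. *)
Definition MSC (Q : {set T} -> T -> T -> R) (nu : {set T} -> T -> R) : Prop :=
  forall M : {set T}, menu M ->
    [/\ (forall i j, i \in M -> j \in M -> 0 <= Q M i j),
        (forall i, i \in M -> 0 <= nu M i),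
        \sum_(i in M) nu M i = 1,
        (* (A1) *)
        (forall i, i \in M ->
           Q M i i = 1 - \sum_(k in M | k != i) Q M i k /\ 0 < Q M i i) &
        forall i j, i \in M -> j \in M -> i != j ->
          (* (A2) *)
          (Q [set i; j] i j = 0 -> 0 < Q [set i; j] j i) /\
          (* (A3) *)
          Q [set i; j] i j * Q M j i = Q [set i; j] j i * Q M i j].

(* nu Q^t on the menu M (row vector indexed by elements of M). *)
Definition vpow (Q : {set T} -> T -> T -> R) (nu : {set T} -> T -> R)
  (M : {set T}) (t : nat) : T -> R :=
  iter t (fun v j => \sum_(i in M) v i * Q M i j) (nu M).

Definition abel_sum (Q : {set T} -> T -> T -> R) (nu : {set T} -> T -> R)
  (M : {set T}) (j : T) (alpha : R) : R :=
  limn (series (fun t : nat => alpha * (1 - alpha) ^+ t * vpow Q nu M t j)).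

Definition rationalizes (p : T -> {set T} -> R)
  (Q : {set T} -> T -> T -> R) (nu : {set T} -> T -> R) : Prop :=
  forall M : {set T}, menu M -> forall j, j \in M ->
    (abel_sum Q nu M j a @[a --> (0:R)^'+] --> p j M)%classic.

Definition pairwise_comparable (Q : {set T} -> T -> T -> R) (M : {set T})
  : Prop :=
  forall i j, i \in M -> j \in M -> i != j -> Q M i j = 0 -> 0 < Q M j i.

Definition fully_comparable (Q : {set T} -> T -> T -> R) (M : {set T})
  : Prop :=
  forall i j, i \in M -> j \in M -> i != j -> 0 < Q M i j.

End Defs.

From HB Require Import structures.
From mathcomp Require Import all_boot all_order all_algebra.
From mathcomp Require Import all_classical all_reals all_analysis.
From mathcomp Require Import lra ring.
Import Order.TTheory GRing.Theory Num.Theory.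
Import numFieldNormedType.Exports.
Local Open Scope ring_scope.

(* If [Q] rationalizes [p], then [p(., N)] is stationary for [Q(N)]: pass to
   the Abel limit in the stationarity relation satisfied by the Abel averages.
   Stationarity on binary menus together with (A3) gives
   [p(i,{i,j}) q_ij(M) = p(j,{i,j}) q_ji(M)], so the net flow
   [p(i,M) q_ij(M) - p(j,M) q_ji(M)] of the chain on [M] equals
   [(q_ij(M) + q_ji(M)) delta_ij(M)].  Hence [w_ij = q_ij(M) + q_ji(M)] is a
   symmetric nonnegative weight whose flow [w_ij delta_ij(M)] is conserved at
   every node of [M], and [w] is positive on all pairs iff [Q(M)] is pairwise
   comparable.

   Boundedness in cycles is equivalent to the existence of such a weight. A
   positive edge of a conserved antisymmetric flow lies on a cycle of positive
   edges, which bounds [delta_ij(M)] in a cycle. Conversely, a pair with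
   [delta_ij(M) = 0] gets a weight of its own, and a cycle on which [delta] has
   constant sign carries the constant flow [+-1] when every edge is weighted by
   [+-1/delta]; summing over all pairs gives a weight positive everywhere.

   From such a weight [w] one builds an MSC with [nu_N = p(., N)] and
   [q_ij(M) = t w_ij p(j,{i,j})] for small [t > 0], a constant multiple of
   [p(j,{i,j})] on binary menus and the identity elsewhere; its stationary
   distributions are [p(., N)].  Part (b) adds the positivity that full
   comparability forces through stationarity, and that conversely makes this
   chain fully comparable. *)

Lemma abel_series_cst (R : realType) (a c : R) : 0 < a < 1 ->
  limn (series (fun t : nat => a * (1 - a) ^+ t * c)) = c.
Proof.
case/andP=> a0 a1.
have -> : (fun t : nat => a * (1 - a) ^+ t * c) = geometric (a * c) (1 - a).
  by apply/funext => t /=; rewrite mulrAC.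
apply: cvg_lim; first exact: Rhausdorff.
have ratio_lt1 : `|1 - a| < 1 by rewrite ger0_norm ?subr_ge0 ?ltW // ltrBlDr ltrDl.
have := @cvg_geometric_series R (a * c) _ ratio_lt1.
suff -> : a * c * (1 - (1 - a))^-1 = c by [].
by rewrite opprB addrC subrK mulrAC mulfV ?mul1r // gt_eqF.
Qed.

Section AbelAverage.
Local Open Scope classical_set_scope.
Context {R : realType} {T : finType}.
Variables (Q : {set T} -> T -> T -> R) (nu : {set T} -> T -> R) (N : {set T}).

Let abel_term (a : R) (j : T) (t : nat) := a * (1 - a) ^+ t * vpow Q nu N t j.

Lemma vpowS t j : vpow Q nu N t.+1 j = \sum_(i in N) vpow Q nu N t i * Q N i j.
Proof. by []. Qed.

Lemma abel_sum_stationary a j :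
  {in N, forall j, \sum_(i in N) nu N i * Q N i j = nu N j} ->
  0 < a < 1 -> j \in N -> abel_sum Q nu N j a = nu N j.
Proof.
move=> nu_stat a01 jN.
have vpow_cst t i : i \in N -> vpow Q nu N t i = nu N i.
  elim: t i => [//|t IH] i iN; rewrite vpowS -nu_stat //.
  by apply: eq_bigr => k kN; rewrite IH.
rewrite /abel_sum (_ : (fun t => _) = fun t : nat => a * (1 - a) ^+ t * nu N j).
  exact: abel_series_cst.
by apply/funext => t; rewrite vpow_cst.
Qed.

Lemma abel_series_recursion a j n :
  (1 - a) * \sum_(i in N) series (abel_term a i) n * Q N i j
  = series (abel_term a j) n.+1 - a * nu N j.
Proof.
elim: n => [|n IH].
  rewrite seriesS /series /= big_geq // big1 ?mulr0; last first.
    by move=> i _; rewrite big_geq // mul0r.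
  by rewrite /abel_term expr0 mulr1 addr0 subrr.
rewrite [in RHS]seriesSr.
under eq_bigr do rewrite seriesSr mulrDl.
rewrite big_split mulrDr IH /abel_term vpowS exprS addrAC; congr (_ + _ - _).
rewrite !mulr_sumr; apply: eq_bigr => i _.
by rewrite !mulrA (mulrC (1 - a) a) -!mulrA.
Qed.

Hypothesis Q_ge0 : {in N &, forall i j, 0 <= Q N i j}.
Hypothesis Q_row : {in N, forall i, \sum_(j in N) Q N i j = 1}.
Hypothesis nu_ge0 : {in N, forall i, 0 <= nu N i}.
Hypothesis nu_sum : \sum_(i in N) nu N i = 1.

Lemma vpow_distribution t :
  {in N, forall j, 0 <= vpow Q nu N t j} /\ \sum_(j in N) vpow Q nu N t j = 1.
Proof.
elim: t => [|t [IH_ge0 IH_sum]]; first by split.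
split=> [j jN|].
  by rewrite vpowS; apply: sumr_ge0 => i iN; rewrite mulr_ge0 ?IH_ge0 ?Q_ge0.
under eq_bigr do rewrite vpowS.
rewrite exchange_big /= -{}IH_sum; apply: eq_bigr => i iN.
by rewrite -mulr_sumr Q_row // mulr1.
Qed.

Lemma vpow_le1 t j : j \in N -> vpow Q nu N t j <= 1.
Proof.
move=> jN; have [vpow_ge0 vpow_sum] := vpow_distribution t.
rewrite -vpow_sum (bigD1 j) //= lerDl.
by apply: sumr_ge0 => i /andP[iN _]; exact: vpow_ge0.
Qed.

Lemma abel_series_cvg a j : 0 < a < 1 -> j \in N ->
  series (abel_term a j) @ \oo --> abel_sum Q nu N j a.
Proof.
move=> /andP[a0 a1] jN.
have weight_ge0 t : 0 <= a * (1 - a) ^+ t.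
  by rewrite mulr_ge0 ?exprn_ge0 ?subr_ge0 ?ltW.
apply: nondecreasing_is_cvgn.
  rewrite seriesEnat; apply: nondecreasing_series => t _ _.
  by rewrite mulr_ge0 ?weight_ge0 // (vpow_distribution t).1.
exists 1 => _ [n _ <-].
apply: (@le_trans _ _ (series (geometric a (1 - a)) n)).
  rewrite !seriesEnat /=; apply: ler_sum => t _.
  by rewrite -[leRHS]mulr1 ler_wpM2l ?weight_ge0 ?vpow_le1.
have ratio_lt1 : `|1 - a| < 1 by rewrite ger0_norm ?subr_ge0 ?ltW // ltrBlDr ltrDl.
apply: le_trans (geometric_le_lim n (ltW a0) _ ratio_lt1) _; first by rewrite subr_gt0.
by rewrite opprB addrC subrK mulfV ?gt_eqF.
Qed.

Lemma abel_sum_recursion a j : 0 < a < 1 -> j \in N ->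
  (1 - a) * \sum_(i in N) abel_sum Q nu N i a * Q N i j
  = abel_sum Q nu N j a - a * nu N j.
Proof.
move=> a01 jN.
have lhs_cvg : (fun n => (1 - a) * \sum_(i in N) series (abel_term a i) n * Q N i j)
    @ \oo --> (1 - a) * \sum_(i in N) abel_sum Q nu N i a * Q N i j.
  apply: cvgM; first exact: cvg_cst.
  apply: (@cvg_big _ _ +%R 0 _ add_continuous) => i iN.
  by apply: cvgM; [exact: abel_series_cvg | exact: cvg_cst].
have rhs_cvg : (fun n => series (abel_term a j) n.+1 - a * nu N j)
    @ \oo --> abel_sum Q nu N j a - a * nu N j.
  apply: cvgB; last exact: cvg_cst.
  by have := abel_series_cvg a j a01 jN; rewrite -cvg_shiftS.
rewrite (funext (abel_series_recursion a j)) in lhs_cvg.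
exact: cvg_unique lhs_cvg rhs_cvg.
Qed.

Lemma abel_limit_stationary (pi : T -> R) :
  {in N, forall j, abel_sum Q nu N j a @[a --> 0^'+] --> pi j} ->
  {in N, forall j, \sum_(i in N) pi i * Q N i j = pi j}.
Proof.
move=> abel_cvg j jN.
have id_cvg : (fun a : R => a) @ 0^'+ --> (0 : R).
  by apply: cvg_at_right_filter; exact: cvg_id.
have lhs_cvg : (fun a => (1 - a) * \sum_(i in N) abel_sum Q nu N i a * Q N i j)
    @ 0^'+ --> (1 - 0) * \sum_(i in N) pi i * Q N i j.
  apply: cvgM; first exact: cvgB (cvg_cst _) id_cvg.
  apply: (@cvg_big _ _ +%R 0 _ add_continuous) => i iN.
  by apply: cvgM; [exact: abel_cvg | exact: cvg_cst].
have rhs_cvg : (fun a => abel_sum Q nu N j a - a * nu N j) @ 0^'+ --> pi j - 0 * nu N j.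
  by apply: cvgB; [exact: abel_cvg | apply: cvgM; [exact: id_cvg | exact: cvg_cst]].
have near_eq : \forall a \near 0^'+, abel_sum Q nu N j a - a * nu N j =
    (1 - a) * \sum_(i in N) abel_sum Q nu N i a * Q N i j.
  apply: filterS2 (nbhs_right_gt (0:R)) (nbhs_right_lt (@ltr01 R)) => a a0 a1.
  by rewrite abel_sum_recursion // a0 a1.
have {}rhs_cvg := cvg_trans (@near_eq_cvg _ _ _ _ _ _ near_eq) rhs_cvg.
have lim_at0 := @cvg_lim _ (@Rhausdorff R) _ _ (at_right_proper_filter (0 : R)).
have := lim_at0 _ _ lhs_cvg.
by rewrite (lim_at0 _ _ (rhs_cvg _)) subr0 mul1r mul0r subr0.
Qed.

End AbelAverage.

Section BalancedFlow.
Context {R : realType} {T : finType}.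
Context {M : {set T}} {g : T -> T -> R}.
Hypothesis g_antisym : {in M &, forall k l, g l k = - g k l}.
Hypothesis g_balanced : {in M, forall k, \sum_(l in M) g k l = 0}.

Lemma cut_flow_eq0 (S : {set T}) : S \subset M ->
  \sum_(k in S) \sum_(l in M :\: S) g k l = 0.
Proof.
move=> SM; have S_M := fintype.subsetP SM.
have inner : \sum_(k in S) \sum_(l in S) g k l = 0.
  suff : \sum_(k in S) \sum_(l in S) g k l = - \sum_(k in S) \sum_(l in S) g k l.
    by lra.
  rewrite [LHS]exchange_big /= -sumrN; apply: eq_bigr => k kS.
  by rewrite -sumrN; apply: eq_bigr => l lS; rewrite g_antisym ?S_M.
have total : \sum_(k in S) \sum_(l in M) g k l = 0.
  by apply: big1 => k kS; rewrite g_balanced ?S_M.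
rewrite -[in RHS]total.
under [RHS]eq_bigr do rewrite (big_setID S) /= (finset.setIidPr SM).
by rewrite big_split /= inner add0r.
Qed.

Lemma balanced_flow_cycle i j : i \in M -> j \in M -> 0 < g i j ->
  exists s : seq T, [/\ uniq s, {subset s <= M}, i \in s, next s i = j &
    cycle (fun k l => 0 < g k l) s].
Proof.
move=> iM jM gij.
(* The nodes [S] reachable from [j] along positive edges have no positive
   outflow and zero net outflow, so the negative edge from [j] to [i] cannot
   leave [S]. *)
pose e := [rel k l | (l \in M) && (0 < g k l)].
have /connectP[s0 ps0] : connect e j i.
  apply: contraT => not_ji; pose S := [set k in M | connect e j k].
  have out_le0 k l : k \in S -> l \in M :\: S -> g k l <= 0.
    rewrite !inE => /andP[kM jk] /andP[lS lM]; rewrite leNgt.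
    apply: contra lS => gkl; rewrite lM (connect_trans jk) //.
    by apply: connect1; rewrite /= lM gkl.
  have : \sum_(k in S) \sum_(l in M :\: S) g k l < 0.
    rewrite (bigD1 j) /=; last by rewrite inE jM connect0.
    rewrite (bigD1 i) /=; last by rewrite !inE iM not_ji.
    have gji : g j i < 0 by rewrite g_antisym // oppr_lt0.
    have rest_j : \sum_(l in M :\: S | l != i) g j l <= 0.
      by apply: sumr_le0 => l /andP[lMS _]; rewrite out_le0 // inE jM connect0.
    have rest : \sum_(k in S | k != j) \sum_(l in M :\: S) g k l <= 0.
      by apply: sumr_le0 => k /andP[kS _]; apply: sumr_le0 => l; exact: out_le0.
    lra.
  by rewrite cut_flow_eq0 ?ltxx //; apply/fintype.subsetP => k; rewrite inE => /andP[].
case: (shortenP ps0) => s ps us _ i_last.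
have sM : {subset s <= M}.
  elim: s (j) ps {us i_last} => [//|y s IH] x /= /andP[/andP[yM _] ps] z.
  by rewrite inE => /predU1P[->//|]; exact: IH ps z.
exists (j :: s); split=> //.
- by move=> k; rewrite inE => /predU1P[->//|]; exact: sM.
- by rewrite i_last mem_last.
- by rewrite i_last next_nth mem_last index_last // nth_default.
- by rewrite /= rcons_path -i_last gij andbT; apply: sub_path ps => k l /andP[].
Qed.

End BalancedFlow.

Section BalancingWeights.
Context {R : realType} {T : finType}.
Implicit Types (d w : T -> T -> R) (M : {set T}).

Lemma delta_antisym (p : T -> {set T} -> R) M i j :
  delta p M j i = - delta p M i j.
Proof. by rewrite /delta finset.setUC; lra. Qed.

Lemma delta_diag (p : T -> {set T} -> R) M i : delta p M i i = 0.
Proof. by rewrite /delta mulrC subrr. Qed.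

Definition balancing d M w : Prop :=
  [/\ {in M &, forall k l, w k l = w l k},
      {in M &, forall k l, 0 <= w k l} &
      {in M, forall k, \sum_(l in M) w k l * d k l = 0}].

Lemma balancing_sum d M (I : finType) (W : I -> T -> T -> R) :
  (forall x, balancing d M (W x)) ->
  balancing d M (fun k l => \sum_(x : I) W x k l).
Proof.
move=> W_bal; split=> [k l kM lM|k l kM lM|k kM].
- by apply: eq_bigr => x _; have [W_sym _ _] := W_bal x; exact: W_sym.
- by apply: sumr_ge0 => x _; have [_ W_ge0 _] := W_bal x; exact: W_ge0.
under eq_bigr do rewrite mulr_suml.
by rewrite exchange_big big1 // => x _; have [_ _ W_sum] := W_bal x; exact: W_sum.
Qed.

Lemma balancing_positive_cycle {d M w i j} :
  {in M &, forall k l, d l k = - d k l} -> balancing d M w ->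
  i \in M -> j \in M -> 0 < w i j -> 0 < d i j ->
  exists s : seq T, [/\ uniq s, {subset s <= M}, i \in s, next s i = j &
    cycle (fun k l => 0 < d k l) s].
Proof.
move=> d_antisym [w_sym w_ge0 w_bal] iM jM wij dij.
pose g k l := w k l * d k l.
have g_antisym : {in M &, forall k l, g l k = - g k l}.
  by move=> k l kM lM; rewrite /g w_sym // d_antisym // mulrN.
have [s [us sM is_ j_next cyc]] := balanced_flow_cycle g_antisym w_bal i j iM jM
  (mulr_gt0 wij dij).
exists s; split=> //; apply: cycle_from_next => // k ks.
have kM := sM k ks; have nkM : next s k \in M by rewrite sM ?mem_next.
have := next_cycle cyc ks; apply: contraTT; rewrite -!leNgt => d_le0.
exact: mulr_ge0_le0 (w_ge0 _ _ kM nkM) d_le0.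
Qed.

Lemma balancing0 d M : balancing d M (fun _ _ => 0).
Proof. by split=> // k _; rewrite big1 // => l _; rewrite mul0r. Qed.

Lemma balancing_scale d M w t : 0 <= t -> balancing d M w ->
  balancing d M (fun k l => t * w k l).
Proof.
move=> t_ge0 [w_sym w_ge0 w_sum]; split=> [k l kM lM|k l kM lM|k kM].
- by rewrite w_sym.
- by rewrite mulr_ge0 ?w_ge0.
by under eq_bigr do rewrite -mulrA; rewrite -mulr_sumr w_sum ?mulr0.
Qed.

Lemma balancing_bounded_in_cycle {p : T -> {set T} -> R} {M w i j} :
  balancing (delta p M) M w -> i \in M -> j \in M -> 0 < w i j ->
  bounded_in_cycle p M i j.
Proof.
move=> w_bal iM jM wij; rewrite /bounded_in_cycle.
have [dij_pos|dij_neg|->] := ltrgt0P (delta p M i j); [right|right|by left].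
  have [s [us sM is_ j_next cyc]] :=
    balancing_positive_cycle (fun k l _ _ => delta_antisym p M k l) w_bal iM jM wij dij_pos.
  by exists s; split=> //; left.
pose nd k l := - delta p M k l.
have nd_bal : balancing nd M w.
  have [w_sym w_ge0 w_sum] := w_bal; split=> // k kM.
  by under eq_bigr do rewrite /nd mulrN; rewrite sumrN w_sum ?oppr0.
have nd_antisym : {in M &, forall k l, nd l k = - nd k l}.
  by move=> k l _ _; rewrite /nd delta_antisym.
have nd_ij : 0 < nd i j by rewrite /nd oppr_gt0.
have [s [us sM is_ j_next cyc]] :=
  balancing_positive_cycle nd_antisym nd_bal iM jM wij nd_ij.
exists s; split=> //; right; apply: sub_cycle cyc => k l.
by rewrite oppr_gt0.
Qed.

Definition edge_weight (u v : T) (c : R) : T -> T -> R :=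
  fun k l => c * ((k == u)%:R * (l == v)%:R + (k == v)%:R * (l == u)%:R).

Lemma edge_weightC u v c k l : edge_weight u v c k l = edge_weight u v c l k.
Proof.
by rewrite /edge_weight addrC [(k == v)%:R * _]mulrC [(k == u)%:R * _]mulrC.
Qed.

Lemma edge_weight_ge0 u v c k l : 0 <= c -> 0 <= edge_weight u v c k l.
Proof. by move=> c_ge0; rewrite mulr_ge0 ?addr_ge0 ?mulr_ge0. Qed.

Definition cycle_weight (s : seq T) (c : T -> R) : T -> T -> R :=
  fun k l => \sum_(u <- s) edge_weight u (next s u) (c u) k l.

Lemma sum_indicator M v (F : T -> R) :
  v \in M -> \sum_(l in M) (l == v)%:R * F l = F v.
Proof.
move=> vM; rewrite (bigD1 v) //= eqxx mul1r big1 ?addr0 // => l /andP[_ lv].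
by rewrite (negbTE lv) mul0r.
Qed.

Lemma edge_weight_flow d M u v c k : u \in M -> v \in M ->
  \sum_(l in M) edge_weight u v c k l * d k l
  = c * ((k == u)%:R * d u v + (k == v)%:R * d v u).
Proof.
move=> uM vM; rewrite /edge_weight.
under eq_bigr do rewrite -mulrA mulrDl -!mulrA.
rewrite -mulr_sumr big_split /= -!mulr_sumr !sum_indicator //.
by congr (_ * (_ + _)); case: eqP => [->|]; rewrite ?mul0r.
Qed.

Lemma big_next (s : seq T) (F : T -> R) : uniq s ->
  \sum_(u <- s) F (next s u) = \sum_(u <- s) F u.
Proof.
move=> us; rewrite -(big_map (next s) xpredT F); apply: perm_big.
apply: uniq_perm => //; first by rewrite (map_inj_uniq (can_inj (prev_next us))).
move=> x; apply/mapP/idP => [[u us' ->]|xs]; first by rewrite mem_next.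
by exists (prev s x); [rewrite mem_prev | rewrite next_prev].
Qed.

Section SignedCycle.
Variables (d : T -> T -> R) (M : {set T}) (s : seq T) (sgn : R).
Hypothesis d_antisym : {in M &, forall k l, d l k = - d k l}.
Hypotheses (us : uniq s) (sM : {subset s <= M}).
Hypothesis cycle_sign : {in s, forall u, 0 < sgn / d u (next s u)}.

(* Weighting each edge of the cycle by [sgn / d] sends the same flow [sgn]
   along every edge, so inflow and outflow cancel at each node. *)
Let c u := sgn / d u (next s u).

Lemma cycle_weight_balancing : balancing d M (cycle_weight s c).
Proof.
have c_ge0 u : u \in s -> 0 <= c u by move=> us'; exact/ltW/cycle_sign.
split=> [k l _ _|k l _ _|k kM].
- by apply: eq_bigr => u _; rewrite edge_weightC.
- rewrite /cycle_weight big_seq; apply: sumr_ge0 => u us'.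
  by rewrite edge_weight_ge0 ?c_ge0.
rewrite /cycle_weight; under eq_bigr do rewrite mulr_suml.
rewrite exchange_big /= big_seq.
under eq_bigr => u us'.
  have uM : u \in M by exact: sM.
  have nuM : next s u \in M by rewrite sM ?mem_next.
  have flow_u : c u * d u (next s u) = sgn.
    apply: divfK; apply: contraTneq (cycle_sign _ us') => ->.
    by rewrite invr0 mulr0 ltxx.
  rewrite edge_weight_flow // (d_antisym _ _ uM nuM) mulrN mulrDr.
  rewrite mulrN mulrCA flow_u mulrCA flow_u.
  over.
rewrite -big_seq sumrB -!mulr_suml.
by rewrite (big_next s (fun u => (k == u)%:R)) // subrr.
Qed.

Lemma cycle_weight_gt0 i : i \in s -> 0 < cycle_weight s c i (next s i).
Proof.
move=> is_; rewrite /cycle_weight (big_rem i) //= {1}/edge_weight !eqxx mul1r.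
apply: ltr_pwDl.
  by rewrite mulr_gt0 ?cycle_sign // ltr_pwDl ?mulr_ge0.
rewrite big_seq; apply: sumr_ge0 => u /mem_rem us'.
by rewrite edge_weight_ge0 ?ltW ?cycle_sign.
Qed.

End SignedCycle.

Lemma bounded_in_cycle_balancing {p : T -> {set T} -> R} {M i j} :
  i \in M -> j \in M -> bounded_in_cycle p M i j ->
  exists w, balancing (delta p M) M w /\ 0 < w i j.
Proof.
move=> iM jM [d0|[s [us sM is_ j_next cyc]]].
  exists (edge_weight i j 1); split; last by rewrite /edge_weight !eqxx !mul1r ltr_pwDl.
  split=> [k l _ _|k l _ _|k kM].
  - by rewrite edge_weightC.
  - exact: edge_weight_ge0.
  by rewrite edge_weight_flow // [delta _ _ j i]delta_antisym d0 oppr0 !mulr0 addr0 mulr0.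
have d_antisym : {in M &, forall k l, delta p M l k = - delta p M k l}.
  by move=> k l _ _; rewrite delta_antisym.
have [pos_cycle|neg_cycle] := cyc.
  have sign u : u \in s -> 0 < 1 / delta p M u (next s u).
    by move=> us'; rewrite div1r invr_gt0 (next_cycle pos_cycle).
  exists (cycle_weight s (fun u => 1 / delta p M u (next s u))).
  by rewrite -j_next; split; [exact: cycle_weight_balancing | exact: cycle_weight_gt0].
have sign u : u \in s -> 0 < -1 / delta p M u (next s u).
  by move=> us'; rewrite mulN1r oppr_gt0 invr_lt0 (next_cycle neg_cycle).
exists (cycle_weight s (fun u => -1 / delta p M u (next s u))).
by rewrite -j_next; split; [exact: cycle_weight_balancing | exact: cycle_weight_gt0].
Qed.

Lemma bounded_in_cycle_balancing_weight {p : T -> {set T} -> R} {M} :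
  (forall i j, i \in M -> j \in M -> i != j -> bounded_in_cycle p M i j) ->
  exists w, balancing (delta p M) M w /\ {in M &, forall i j, i != j -> 0 < w i j}.
Proof.
move=> bounded.
have pair_weight (x : T * T) : exists w, balancing (delta p M) M w /\
    (x.1 \in M -> x.2 \in M -> x.1 != x.2 -> 0 < w x.1 x.2).
  have [/and3P[iM jM ij]|] := boolP [&& x.1 \in M, x.2 \in M & x.1 != x.2].
    have [w [w_bal wij]] := bounded_in_cycle_balancing iM jM (bounded _ _ iM jM ij).
    by exists w.
  move=> not_pair; exists (fun _ _ => 0); split=> [|iM jM ij]; first exact: balancing0.
  by rewrite iM jM ij in not_pair.
have [W W_spec] := choice pair_weight.
exists (fun k l => \sum_(x : T * T) W x k l); split.
  by apply: balancing_sum => x; have [] := W_spec x.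
move=> i j iM jM ij; rewrite (bigD1 (i, j)) //=.
apply: ltr_pwDl; first by have [_] := W_spec (i, j); apply.
by apply: sumr_ge0 => x _; have [[_ W_ge0 _] _] := W_spec x; exact: W_ge0.
Qed.

End BalancingWeights.

Section ChoiceFunctions.
Context {R : realType} {T : finType}.
Context {p : T -> {set T} -> R}.
Hypothesis p_sc : stoch_choice p.

Lemma menu2 (i j : T) : menu [set i; j].
Proof. by apply/finset.set0Pn; exists i; rewrite !inE eqxx. Qed.

Lemma choice_ge0 N i : menu N -> 0 <= p i N.
Proof. by move=> mN; have [/(_ i)/andP[]] := p_sc N mN. Qed.

Lemma choice_le1 N i : menu N -> p i N <= 1.
Proof. by move=> mN; have [/(_ i)/andP[]] := p_sc N mN. Qed.

Lemma choice_sum {N} : menu N -> \sum_(i in N) p i N = 1.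
Proof. by move=> mN; have [_ []] := p_sc N mN. Qed.

Lemma choice_pair_sum {i j} : i != j -> p i [set i; j] + p j [set i; j] = 1.
Proof.
move=> ij; rewrite -(choice_sum (menu2 i j)) finset.big_setU1 ?big_set1 //=.
by rewrite inE.
Qed.

Lemma choice_pair_refl i : p i [set i; i] = 1.
Proof. by have := choice_sum (menu2 i i); rewrite finset.setUid finset.big_set1. Qed.

End ChoiceFunctions.

Section Rationalization.
Context {R : realType} {T : finType}.
Context {p : T -> {set T} -> R} {Q : {set T} -> T -> T -> R} {nu : {set T} -> T -> R}.
Hypotheses (p_sc : stoch_choice p) (Q_msc : MSC Q nu) (Q_rat : rationalizes p Q nu).

Lemma msc_row_sum {N i} : menu N -> i \in N -> \sum_(k in N) Q N i k = 1.
Proof.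
move=> mN iN; have [_ _ _ A1 _] := Q_msc N mN; have [Q_ii _] := A1 i iN.
by rewrite (bigD1 i) //= {1}Q_ii subrK.
Qed.

Lemma rationalizes_stationary {N} : menu N ->
  {in N, forall j, \sum_(i in N) p i N * Q N i j = p j N}.
Proof.
move=> mN; have [Q_ge0 nu_ge0 nu_sum _ _] := Q_msc N mN.
apply: (@abel_limit_stationary _ _ Q nu N) => //; first by move=> i; exact: msc_row_sum.
exact: Q_rat.
Qed.

Lemma pair_detailed_balance {i j} : i != j ->
  p i [set i; j] * Q [set i; j] i j = p j [set i; j] * Q [set i; j] j i.
Proof.
move=> ij; have iN : i \in [set i; j] by rewrite !inE eqxx.
have := rationalizes_stationary (menu2 i j) i iN.
have := msc_row_sum (menu2 i j) iN.
rewrite !finset.big_setU1 ?big_set1 ?inE //= => row.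
have -> : Q [set i; j] i i = 1 - Q [set i; j] i j by lra.
by rewrite mulrBr mulr1; lra.
Qed.

(* Condition (A3) transports the pairwise detailed balance to every menu. *)
Lemma pair_choice_balance {M i j} : menu M -> i \in M -> j \in M -> i != j ->
  p i [set i; j] * Q M i j = p j [set i; j] * Q M j i.
Proof.
move=> mM iM jM ij; have [_ _ _ _ A] := Q_msc M mM; have [A2 A3] := A i j iM jM ij.
have bal := pair_detailed_balance ij.
set x := p i _ in bal *; set y := p j _ in bal *.
set a := Q _ i j in A2 A3 bal *; set b := Q _ j i in A2 A3 bal *.
set q := Q M i j in A3 *; set r := Q M j i in A3 *.
apply/eqP; rewrite -subr_eq0.
have [a0|a_neq0] := eqVneq a 0.
  have b_gt0 := A2 a0.
  have : b * (x * q - y * r) = x * (b * q - a * r) + r * (x * a - y * b) by ring.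
  rewrite bal A3 !subrr !mulr0 addr0 => /eqP.
  by rewrite mulf_eq0 (gt_eqF b_gt0).
have : a * (x * q - y * r) = q * (x * a - y * b) - y * (a * r - b * q) by ring.
rewrite bal A3 !subrr !mulr0 subrr => /eqP.
by rewrite mulf_eq0 (negbTE a_neq0).
Qed.

Lemma flow_delta M k l : menu M -> k \in M -> l \in M ->
  p k M * Q M k l - p l M * Q M l k = (Q M k l + Q M l k) * delta p M k l.
Proof.
move=> mM kM lM; have [->|kl] := eqVneq k l; first by rewrite delta_diag subrr mulr0.
have odds := pair_choice_balance mM kM lM kl.
have pair_sum := choice_pair_sum p_sc kl.
apply/eqP; rewrite -subr_eq0 /delta.
set x := p k _ in odds pair_sum *; set y := p l _ in odds pair_sum *.
set q := Q M k l in odds *; set r := Q M l k in odds *.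
set X := p k M; set Y := p l M.
rewrite [X in X == 0](_ : _ = (X * q - Y * r) * (1 - (x + y))
  + (X + Y) * (x * q - y * r)); last by ring.
by rewrite pair_sum odds !subrr !mulr0 addr0.
Qed.

Lemma transition_balancing {M} : menu M ->
  balancing (delta p M) M (fun k l => Q M k l + Q M l k).
Proof.
move=> mM; have [Q_ge0 _ _ _ _] := Q_msc M mM.
split=> [k l _ _|k l kM lM|k kM]; first exact: addrC.
  by rewrite addr_ge0 ?Q_ge0.
under eq_bigr => l lM do rewrite -flow_delta //.
by rewrite sumrB -mulr_sumr msc_row_sum // rationalizes_stationary // mulr1 subrr.
Qed.

Lemma rationalizes_bounded_in_cycle {M} : menu M -> pairwise_comparable Q M ->
  forall i j, i \in M -> j \in M -> i != j -> bounded_in_cycle p M i j.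
Proof.
move=> mM Q_pc i j iM jM ij; have [Q_ge0 _ _ _ _] := Q_msc M mM.
apply: (balancing_bounded_in_cycle (transition_balancing mM)) => //.
have [Qij0|Qij_neq0] := eqVneq (Q M i j) 0; first by rewrite Qij0 add0r Q_pc.
by rewrite -[0]addr0 ltr_leD ?Q_ge0 // lt_def Qij_neq0 Q_ge0.
Qed.

Lemma fully_comparable_choice_gt0 {M} : menu M -> fully_comparable Q M ->
  {in M, forall i, 0 < p i M}.
Proof.
move=> mM Q_fc i iM; have [Q_ge0 _ _ _ _] := Q_msc M mM.
have [k kM pk_gt0] : exists2 k, k \in M & 0 < p k M.
  apply/exists_inP; apply: contraT; rewrite negb_exists_in => /forall_inP p_le0.
  have : \sum_(k in M) p k M <= 0.
    by apply: sumr_le0 => k /p_le0; rewrite -leNgt.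
  by rewrite choice_sum // ler10.
have [<-//|ki] := eqVneq k i.
rewrite -rationalizes_stationary // (bigD1 k) //= ltr_pwDl ?mulr_gt0 ?Q_fc //.
by apply: sumr_ge0 => l /andP[lM _]; rewrite mulr_ge0 ?choice_ge0 ?Q_ge0.
Qed.

Lemma fully_comparable_pair_choice_gt0 {M} : menu M -> fully_comparable Q M ->
  {in M &, forall i j, 0 < p i [set i; j]}.
Proof.
move=> mM Q_fc i j iM jM; have [<-|ij] := eqVneq i j; first by rewrite choice_pair_refl.
have [_ _ _ _ A] := Q_msc M mM.
have Qji_gt0 : 0 < Q [set i; j] j i.
  have [Q2_ge0 _ _ _ _] := Q_msc [set i; j] (menu2 i j).
  rewrite lt_def Q2_ge0 ?andbT ?inE ?eqxx ?orbT //; apply/eqP => Qji0.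
  have [A2 A3] := A i j iM jM ij; move: A3; rewrite Qji0 mul0r => /eqP.
  rewrite mulf_eq0 => /orP[/eqP/A2|]; first by rewrite Qji0 ltxx.
  by rewrite gt_eqF ?Q_fc // eq_sym.
have bal := pair_detailed_balance ij.
have pair_sum := choice_pair_sum p_sc ij.
rewrite lt_def (choice_ge0 p_sc _ i (menu2 i j)) andbT; apply/eqP => pi0.
move: bal; rewrite pi0 mul0r => /esym/eqP; rewrite mulf_eq0 (gt_eqF Qji_gt0) orbF.
by move/eqP => pj0; move: pair_sum; rewrite pi0 pj0 addr0 => /eqP; rewrite eq_sym oner_eq0.
Qed.

End Rationalization.

Lemma set2_card2 {T : finType} {N : {set T}} {i k} : #|N| = 2 -> i \in N -> k \in N ->
  i != k -> [set i; k] = N.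
Proof.
move=> N2 iN kN ik; apply/eqP; rewrite eqEcard N2 cards2 ik andbT.
by apply/fintype.subsetP => x; rewrite !inE => /orP[/eqP->|/eqP->].
Qed.

Lemma balancing_pair_cst {R : realType} {T : finType} (p : T -> {set T} -> R)
  (N : {set T}) (c : R) :
  #|N| = 2 -> 0 <= c -> balancing (delta p N) N (fun _ _ => c).
Proof.
move=> N2 c_ge0; split=> // k kN; rewrite big1 // => l lN.
have [<-|kl] := eqVneq k l; first by rewrite delta_diag mulr0.
by rewrite /delta (set2_card2 N2 kN lN kl) subrr mulr0.
Qed.

Section BalancedChain.
Context {R : realType} {T : finType}.
Variables (p : T -> {set T} -> R) (W : {set T} -> T -> T -> R).

(* For symmetric [W N], condition (A3) holds automatically and the net flow
   [p i N * q_ij - p j N * q_ji] equals [W N i j * delta p N i j]. *)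
Definition balanced_chain (N : {set T}) (i j : T) : R :=
  if i == j then 1 - \sum_(k in N | k != i) W N i k * p k [set i; k]
  else W N i j * p j [set i; j].

Definition chain_weights : Prop :=
  [/\ forall N, balancing (delta p N) N (W N),
      forall N, menu N ->
        {in N, forall i, \sum_(k in N | k != i) W N i k * p k [set i; k] < 1} &
      forall i j, i != j -> 0 < W [set i; j] i j].

Hypotheses (p_sc : stoch_choice p) (W_chain : chain_weights).

Lemma balanced_chain_stationary N : menu N ->
  {in N, forall j, \sum_(i in N) p i N * balanced_chain N i j = p j N}.
Proof.
move=> mN j jN; have [W_bal _ _] := W_chain; have [W_sym _ W_sum] := W_bal N.
have := W_sum j jN; rewrite (bigD1 j) //= delta_diag mulr0 add0r => W_sum_j.
rewrite (bigD1 j) //= /balanced_chain eqxx.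
under eq_bigr => i /andP[_ ij] do rewrite (negbTE ij).
have flows : \sum_(i in N | i != j) p i N * (W N i j * p j [set i; j])
    - p j N * \sum_(k in N | k != j) W N j k * p k [set j; k]
    = - \sum_(i in N | i != j) W N j i * delta p N j i.
  rewrite mulr_sumr -sumrB -sumrN; apply: eq_bigr => i /andP[iN _].
  by rewrite /delta W_sym // finset.setUC; ring.
by move: flows; rewrite W_sum_j oppr0; lra.
Qed.

Lemma balanced_chain_MSC : MSC balanced_chain (fun N i => p i N).
Proof.
have [W_bal W_small W_pair] := W_chain.
move=> N mN; have [W_sym W_ge0 _] := W_bal N.
split=> [i j iN jN|i iN|||i j iN jN ij].
- rewrite /balanced_chain; case: ifP => _; first by rewrite subr_ge0 ltW ?W_small.
  by rewrite mulr_ge0 ?W_ge0 ?(choice_ge0 p_sc _ _ (menu2 i j)).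
- exact: choice_ge0.
- exact: choice_sum.
- move=> i iN; rewrite /balanced_chain eqxx subr_gt0 W_small //; split=> //.
  by congr (_ - _); apply: eq_bigr => k /andP[_ ki]; rewrite eq_sym (negbTE ki).
have ji : j != i by rewrite eq_sym.
rewrite /balanced_chain (negbTE ij) (negbTE ji); split.
  move=> /eqP; rewrite mulf_eq0 (gt_eqF (W_pair _ _ ij)) /= => /eqP pj0.
  have := choice_pair_sum p_sc ij; rewrite pj0 addr0 finset.setUC => ->.
  by rewrite mulr1 W_pair.
have [W2_sym _ _] := W_bal [set i; j].
rewrite W2_sym ?inE ?eqxx ?orbT // W_sym // finset.setUC; ring.
Qed.

Lemma balanced_chain_rationalizes : rationalizes p balanced_chain (fun N i => p i N).
Proof.
move=> N mN j jN; apply: cvg_near_cst.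
apply: filterS2 (nbhs_right_gt (0:R)) (nbhs_right_lt (@ltr01 R)) => a a0 a1.
apply: abel_sum_stationary => //; last by rewrite a0 a1.
exact: balanced_chain_stationary.
Qed.

Section Comparability.
Variable M : {set T}.
Hypothesis W_pos : {in M &, forall i j, i != j -> 0 < W M i j}.

Lemma balanced_chain_pairwise_comparable : pairwise_comparable balanced_chain M.
Proof.
move=> i j iM jM ij; have ji : j != i by rewrite eq_sym.
rewrite /balanced_chain (negbTE ij) (negbTE ji) => /eqP.
rewrite mulf_eq0 (gt_eqF (W_pos _ _ iM jM ij)) /= => /eqP pj0.
have := choice_pair_sum p_sc ij; rewrite pj0 addr0 finset.setUC => ->.
by rewrite mulr1 W_pos.
Qed.

Lemma balanced_chain_fully_comparable :
  {in M &, forall i j, 0 < p i [set i; j]} -> fully_comparable balanced_chain M.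
Proof.
move=> p2_gt0 i j iM jM ij; rewrite /balanced_chain (negbTE ij).
by rewrite mulr_gt0 ?W_pos // finset.setUC p2_gt0.
Qed.

End Comparability.

End BalancedChain.

Lemma bounded_in_cycle_chain_weights {R : realType} {T : finType}
    {p : T -> {set T} -> R} {M : {set T}} :
  stoch_choice p ->
  (forall i j, i \in M -> j \in M -> i != j -> bounded_in_cycle p M i j) ->
  exists W, chain_weights p W /\ {in M &, forall i j, i != j -> 0 < W M i j}.
Proof.
move=> p_sc bounded.
have [w [w_bal w_pos]] := bounded_in_cycle_balancing_weight bounded.
have [_ w_ge0 _] := w_bal.
pose S := \sum_(k in M) \sum_(l in M) w k l.
have row_le_S i : i \in M -> \sum_(k in M) w i k <= S.
  move=> iM; rewrite /S [leRHS](bigD1 i) //= lerDl.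
  by apply: sumr_ge0 => k /andP[kM _]; apply: sumr_ge0 => l lM; exact: w_ge0.
pose t := (1 + S)^-1.
have S_ge0 : 0 <= S.
  by apply: sumr_ge0 => k kM; apply: sumr_ge0 => l lM; exact: w_ge0.
have t_gt0 : 0 < t by rewrite invr_gt0; lra.
(* Binary menus need a positive weight for (A2); any constant is balancing
   there since [delta] vanishes on binary menus. *)
pose W N k l := if N == M then t * w k l else if #|N| == 2 then 2^-1 else 0.
exists W; split; last by rewrite /W eqxx => i j iM jM ij; rewrite mulr_gt0 ?w_pos.
split=> [N|N mN i iN|i j ij].
- rewrite /W; case: eqP => [->|_]; first exact: balancing_scale (ltW t_gt0) w_bal.
  case: eqP => [N2|_]; last exact: balancing0.
  by apply: balancing_pair_cst; rewrite ?invr_ge0.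
- rewrite /W; case: eqP => [NM|_]; last case: eqP => [N2|_].
  + subst N; apply: (@le_lt_trans _ _ (t * S)).
      under eq_bigr do rewrite -mulrA.
      rewrite -mulr_sumr ler_pM2l // (le_trans _ (row_le_S _ iN)) //.
      rewrite [leRHS](bigD1 i) //= ler_wpDl ?w_ge0 // ler_sum // => k /andP[kM _].
      by rewrite ler_piMr ?w_ge0 ?(choice_le1 p_sc _ _ (menu2 i k)).
    by rewrite /t mulrC ltr_pdivrMr; lra.
  + rewrite -mulr_sumr (@le_lt_trans _ _ (2^-1 * 1)) ?mulr1 ?invf_lt1 ?ltr1n //.
    rewrite ler_piMr ?invr_ge0 // -(choice_sum p_sc mN) [leRHS](bigD1 i) //=.
    rewrite (eq_bigr (fun k => p k N)) => [|k /andP[kN ki]].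
      by rewrite lerDr (choice_ge0 p_sc _ _ mN).
    by rewrite (set2_card2 N2 iN kN) // eq_sym.
  + by rewrite big1 ?ltr01 // => k _; rewrite mul0r.
rewrite /W; case: eqP => [NM|_].
  by rewrite mulr_gt0 ?w_pos // -NM !inE eqxx ?orbT.
by rewrite cards2 ij invr_gt0 ltr0n.
Qed.

Theorem theorem2 (R : realType) (T : finType) (p : T -> {set T} -> R)
  (M : {set T}) :
  stoch_choice p -> menu M ->
  ((exists (Q : {set T} -> T -> T -> R) (nu : {set T} -> T -> R),
      [/\ MSC Q nu, rationalizes p Q nu & pairwise_comparable Q M]) <->
   (forall i j, i \in M -> j \in M -> i != j -> bounded_in_cycle p M i j))
  /\
  ((exists (Q : {set T} -> T -> T -> R) (nu : {set T} -> T -> R),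
      [/\ MSC Q nu, rationalizes p Q nu & fully_comparable Q M]) <->
   [/\ (forall i, i \in M -> 0 < p i M),
       (forall i j, i \in M -> j \in M -> 0 < p i [set i; j]) &
       (forall i j, i \in M -> j \in M -> i != j -> bounded_in_cycle p M i j)]).
Proof.
move=> p_sc mM; split; split.
- case=> Q [nu [Q_msc Q_rat Q_pc]].
  exact: (rationalizes_bounded_in_cycle p_sc Q_msc Q_rat mM Q_pc).
- case/(bounded_in_cycle_chain_weights p_sc) => W [W_chain W_pos].
  exists (balanced_chain p W), (fun N i => p i N); split.
  + exact: balanced_chain_MSC.
  + exact: balanced_chain_rationalizes.
  + exact: balanced_chain_pairwise_comparable.
- case=> Q [nu [Q_msc Q_rat Q_fc]].
  have Q_pc : pairwise_comparable Q M.
    by move=> i j iM jM ij Qij0; have := Q_fc i j iM jM ij; rewrite Qij0 ltxx.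
  split; first exact: (fully_comparable_choice_gt0 p_sc Q_msc Q_rat mM Q_fc).
    exact: (fully_comparable_pair_choice_gt0 p_sc Q_msc Q_rat mM Q_fc).
  exact: (rationalizes_bounded_in_cycle p_sc Q_msc Q_rat mM Q_pc).
case=> p_gt0 p2_gt0 /(bounded_in_cycle_chain_weights p_sc) [W [W_chain W_pos]].
exists (balanced_chain p W), (fun N i => p i N); split.
- exact: balanced_chain_MSC.
- exact: balanced_chain_rationalizes.
- exact: balanced_chain_fully_comparable.
Qed.
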